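(* For all integers $\ell\ge0$, $$P(\ell,0,\dots,0)=(1-r)\left[\frac{1+r-\sqrt{(1+r)^2-4r_1}}{2}\right]^{\ell},$$ independently of $K$ and of how $r-r_1$ is split among levels $2,\dots,K$.
   Context: Fix integers $c\ge 1$, $K\ge 2$ and reals $r_1,\dots,r_K>0$ with $r=\sum_{k=1}^K r_k<1$ (here $r_k=\lambda_k/(c\mu)$ for an M/M/$c$ queue with $K$ non-preemptive priority levels, level 1 the highest). Write $\mathbf e_\kappa$ for the standard unit vectors of $\mathbb Z^K$, $\delta_{ij}$ for the Kronecker delta. Consider the equations for $(p_{\mathbf n})_{\mathbf n\in\mathbb N_0^K}$, with the convention $p_{\mathbf n}=0$ if some component of $\mathbf n$ is negative: $$(1+r)p_{\mathbf n}=\Big(\prod_{j=1}^K\delta_{0n_j}\Big)p_{\mathbf n}+\sum_{\kappa=1}^K\Big[r_\kappa p_{\mathbf n-\mathbf e_\kappa}+\Big(\prod_{j=1}^{\kappa-1}\delta_{0n_j}\Big)p_{\mathbf n+\mathbf e_\kappa}\Big],\quad \mathbf n\in\mathbb N_0^K .$$ These are the stationary balance equations for the states in which all $c$ servers are busy and $n_\kappa$ clients of level $\kappa$ wait in the queue; their nonnegative summable solutions form a one-dimensional cone, and $P$ denotes the unique solution with $\sum_{\mathbf n}P(\mathbf n)=1$. *)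

From HB Require Import structures.
From mathcomp Require Import all_boot all_order all_algebra.
From mathcomp Require Import all_classical all_reals all_analysis.
Set Implicit Arguments. Unset Strict Implicit. Unset Printing Implicit Defensive.
Import Order.TTheory GRing.Theory Num.Theory.
Local Open Scope ring_scope.

(* A queue-length vector n in N_0^K, levels indexed by 'I_K
   (level 1 of the paper = index 0). *)
Notation state K := {ffun 'I_K -> nat}.

Definition st_up K (n : state K) (k : 'I_K) : state K :=
  [ffun j => (n j + (j == k))%N].
(* n - e_k (only used when n k > 0) *)
Definition st_down K (n : state K) (k : 'I_K) : state K :=
  [ffun j => (n j - (j == k))%N].

(* p_{n - e_k}, with the convention p = 0 at negative components *)
Definition p_down (R : realType) K (p : state K -> R) (n : state K) (k : 'I_K) : R :=
  if n k == 0%N then 0 else p (st_down n k).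

Definition all_zero K (n : state K) : bool := [forall j, n j == 0%N].
Definition prefix_zero K (n : state K) (k : 'I_K) : bool :=
  [forall j : 'I_K, (j < k)%N ==> (n j == 0%N)].

Definition balance (R : realType) K (rr : 'I_K -> R) (p : state K -> R) : Prop :=
  forall n : state K,
    (1 + \sum_(k < K) rr k) * p n =
      (all_zero n)%:R * p n +
      \sum_(k < K) (rr k * p_down p n k + (prefix_zero n k)%:R * p (st_up n k)).

Definition st_first K (i1 : 'I_K) (l : nat) : state K :=
  [ffun j => if j == i1 then l else 0%N].

From HB Require Import structures.
From mathcomp Require Import all_boot all_order all_algebra.
From mathcomp Require Import all_classical all_reals all_analysis.
From mathcomp Require Import zify ring lra.
Set Implicit Arguments. Unset Strict Implicit. Unset Printing Implicit Defensive.
Import Order.TTheory GRing.Theory Num.Theory.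
Local Open Scope ring_scope.

(** Let U_m be the probability mass of the states with fewer than m waiting
    clients. Summing the balance equations over those states, all internal
    flows cancel and only the flows across the boundary remain:
    (1 + r) U_m = p_0 + r U_(m-1) + (U_(m+1) - p_0), hence
    U_(m+1) - U_m = r^m p_0, and normalisation forces p_0 = 1 - r.
    On the axis (l, 0, ..., 0) only level 1 moves, so the balance equation
    there is the recurrence a_(l+2) = (1 + r) a_(l+1) - r_1 a_l. Its
    characteristic roots z1 < 1 < z2 satisfy z1 + z2 = 1 + r, z1 z2 = r_1,
    and boundedness of a kills the z2 component, so a_l = z1^l p_0. *)

Section States.
Variable K : nat.
Implicit Types (n : state K) (k : 'I_K).

Definition st_tot n : nat := (\sum_(j < K) n j)%N.

Definition st_zero : state K := [ffun _ => 0%N].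

(* Sums over the infinite state space are taken over the box {0, ..., N}^K. *)
Definition st_box (N : nat) : seq (state K) :=
  [seq [ffun j => val (x j)] | x : {ffun 'I_K -> 'I_N.+1} <- enum {ffun 'I_K -> 'I_N.+1}].

Lemma st_le_tot n j : (n j <= st_tot n)%N.
Proof. by rewrite /st_tot (bigD1 j) //= leq_addr. Qed.

Lemma st_box_uniq N : uniq (st_box N).
Proof.
rewrite map_inj_uniq ?enum_uniq // => x y /ffunP xy; apply/ffunP => j.
by apply/val_inj; have := xy j; rewrite !ffunE.
Qed.

Lemma mem_st_box N n : (n \in st_box N) = [forall j, n j <= N]%N.
Proof.
apply/mapP/forallP => [[x _ ->] j|le_nN].
  by rewrite ffunE -ltnS ltn_ord.
exists [ffun j => (inord (n j) : 'I_N.+1)]; first by rewrite mem_enum.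
by apply/ffunP => j; rewrite !ffunE /= inordK // ltnS.
Qed.

Lemma st_tot_box N n : (st_tot n <= N)%N -> n \in st_box N.
Proof.
by move=> le_nN; rewrite mem_st_box; apply/forallP => j; exact: leq_trans (st_le_tot n j) le_nN.
Qed.

Lemma st_box_down N n k : n \in st_box N -> st_down n k \in st_box N.
Proof.
rewrite !mem_st_box => /forallP le_nN; apply/forallP => j; rewrite ffunE.
exact: leq_trans (leq_subr _ _) (le_nN j).
Qed.

Lemma st_tot_zero : st_tot st_zero = 0%N.
Proof. by rewrite /st_tot big1 // => j; rewrite ffunE. Qed.

Lemma st_tot_eq0 n : (st_tot n == 0%N) = (n == st_zero).
Proof.
apply/idP/eqP => [/eqP n0|->]; last by rewrite st_tot_zero.
by apply/ffunP => j; rewrite ffunE; apply/eqP; rewrite -leqn0 -n0 st_le_tot.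
Qed.

Lemma st_tot_up n k : st_tot (st_up n k) = (st_tot n).+1.
Proof.
rewrite /st_tot; under eq_bigr do rewrite ffunE.
rewrite big_split /= -addn1; congr (_ + _)%N.
by rewrite (bigD1 k) //= eqxx big1 // => j /negbTE ->.
Qed.

Lemma st_upK n k : st_down (st_up n k) k = n.
Proof. by apply/ffunP => j; rewrite !ffunE addnK. Qed.

Lemma st_downK n k : n k != 0%N -> st_up (st_down n k) k = n.
Proof.
move=> nk; apply/ffunP => j; rewrite !ffunE.
by case: eqP => [->|_]; rewrite ?subn0 ?addn0 // subnK // lt0n.
Qed.

Lemma st_tot_down n k : n k != 0%N -> (st_tot (st_down n k)).+1 = st_tot n.
Proof. by move=> nk; rewrite -(st_tot_up _ k) st_downK. Qed.

Lemma st_up_neq0 n k : st_up n k k != 0%N.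
Proof. by rewrite ffunE eqxx addn1. Qed.

Lemma prefix_zero_up n k : prefix_zero (st_up n k) k = prefix_zero n k.
Proof.
apply: eq_forallb => j; rewrite ffunE.
by case: ltnP => //= jk; rewrite -val_eqE (ltn_eqF jk) addn0.
Qed.

Lemma prefix_zero_down n k : prefix_zero (st_down n k) k = prefix_zero n k.
Proof.
apply: eq_forallb => j; rewrite ffunE.
by case: ltnP => //= jk; rewrite -val_eqE (ltn_eqF jk) subn0.
Qed.

Lemma all_zeroE n : all_zero n = (n == st_zero).
Proof.
apply/forallP/eqP => [n0|-> j]; last by rewrite ffunE.
by apply/ffunP => j; rewrite ffunE; apply/eqP.
Qed.

Lemma first_nonzero_unique n k k' :
  n k != 0%N -> prefix_zero n k -> n k' != 0%N -> prefix_zero n k' -> k = k'.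
Proof.
move=> nk /forallP pk nk' /forallP pk'; apply/val_inj/eqP; rewrite eqn_leq.
apply/andP; split; rewrite leqNgt; apply/negP => lt_kk.
  by have := pk k'; rewrite lt_kk /= (negbTE nk').
by have := pk' k; rewrite lt_kk /= (negbTE nk).
Qed.

Lemma first_nonzero_exists n :
  n != st_zero -> exists k, (n k != 0%N) && prefix_zero n k.
Proof.
move=> nz; have [j nj] : exists j, n j != 0%N.
  apply/existsP; apply: contraR nz => /existsPn n0.
  by apply/eqP/ffunP => j; rewrite ffunE; apply/eqP; have := n0 j; rewrite negbK.
have [k nk kmin] := @arg_minnP _ j (fun k => n k != 0%N) (@nat_of_ord K) nj.
exists k; rewrite nk /=; apply/forallP => i; apply/implyP => ik.
by apply: contraLR ik => /kmin; rewrite -leqNgt.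
Qed.

End States.

Lemma big_seq_reindex_cond (R : Type) (idx : R) (op : Monoid.com_law idx)
    (T : choiceType) (s : seq T) (P Q : pred T) (h g : T -> T) (F : T -> R) :
  uniq s ->
  (forall x, x \in s -> P x -> (h x \in s) && Q (h x)) ->
  (forall x, x \in s -> P x -> g (h x) = x) ->
  (forall y, y \in s -> Q y -> [&& g y \in s, P (g y) & h (g y) == y]) ->
  \big[op/idx]_(y <- s | Q y) F y = \big[op/idx]_(x <- s | P x) F (h x).
Proof.
move=> us hPQ hK gK.
rewrite big_seq_cond [RHS]big_seq_cond [LHS]bigfs //; last by move=> i /andP[->].
rewrite [RHS]bigfs //; last by move=> i /andP[->].
apply: reindex_fsbig; split.
- by move=> x /=; rewrite !unfold_in /= => /andP[]; exact: hPQ.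
- move=> x y /=; rewrite !mem_setE !unfold_in /= => /andP[xs Px] /andP[ys Py] hxy.
  by rewrite -(hK x xs Px) hxy hK.
- move=> y /=; rewrite !unfold_in /= => /andP[ys Qy].
  have /and3P[gs Pg /eqP hgy] := gK y ys Qy.
  by exists (g y) => //; rewrite unfold_in /= gs Pg.
Qed.

Definition mass_lt (R : realType) K (p : state K -> R) (N m : nat) : R :=
  \sum_(n <- st_box K N | (st_tot n < m)%N) p n.

Section MassRecursion.
Variables (R : realType) (K : nat) (rr : 'I_K -> R) (p : state K -> R).
Hypothesis hbal : balance rr p.
Variable N : nat.
Local Notation box := (st_box K N).
Local Notation mass := (mass_lt p N).
Local Notation r := (\sum_(k < K) rr k).

Lemma mass_lt0 : mass 0 = 0.
Proof. by rewrite /mass_lt big_pred0. Qed.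

Lemma sum_st_tot_lt_zero (F : state K -> R) m : (0 < m)%N ->
  (forall n, n != st_zero K -> (st_tot n < m)%N -> F n = 0) ->
  \sum_(n <- box | (st_tot n < m)%N) F n = F (st_zero K).
Proof.
move=> m_gt0 F0; rewrite big_mkcond (bigD1_seq (st_zero K)) ?st_box_uniq //=; last first.
  by rewrite st_tot_box // st_tot_zero.
rewrite st_tot_zero m_gt0 big1 ?addr0 // => n /F0 Fn0.
by case: ifP => // /Fn0.
Qed.

Lemma mass_lt1 : mass 1 = p (st_zero K).
Proof.
apply: sum_st_tot_lt_zero => // n nz.
by rewrite ltnS leqn0 st_tot_eq0 (negbTE nz).
Qed.

Lemma sum_all_zero_lt m : (0 < m)%N ->
  \sum_(n <- box | (st_tot n < m)%N) (all_zero n)%:R * p n = p (st_zero K).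
Proof.
move=> m_gt0; rewrite (sum_st_tot_lt_zero m_gt0) ?all_zeroE ?eqxx ?mul1r // => n nz _.
by rewrite all_zeroE (negbTE nz) mul0r.
Qed.

Lemma sum_p_down_lt m k : (m <= N.+1)%N ->
  \sum_(n <- box | (st_tot n < m)%N) p_down p n k = mass m.-1.
Proof.
move=> le_mN; rewrite /p_down; under eq_bigr do rewrite -if_neg.
rewrite -big_mkcondr /mass_lt.
rewrite (@big_seq_reindex_cond _ _ _ _ box (fun y => st_tot y < m.-1)%N
  (fun n => (st_tot n < m)%N && (n k != 0%N)) (fun y => st_up y k) (fun y => st_down y k)
  (fun n => p (st_down n k))).
- by apply: eq_bigr => y _; rewrite st_upK.
- exact: st_box_uniq.
- move=> y _ lt_y; rewrite st_tot_up st_up_neq0 st_tot_box ?st_tot_up /=; lia.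
- by move=> y _ _; rewrite st_upK.
- move=> y yb /andP[lt_y yk]; rewrite st_box_down // st_downK // eqxx /=.
  have := st_tot_down yk; lia.
Qed.

Lemma sum_p_up_lt m k : (m <= N)%N ->
  \sum_(n <- box | (st_tot n < m)%N) (prefix_zero n k)%:R * p (st_up n k) =
  \sum_(y <- box | [&& (st_tot y < m.+1)%N, y k != 0%N & prefix_zero y k]) p y.
Proof.
move=> le_mN.
have indicator n : (prefix_zero n k)%:R * p (st_up n k) =
    if prefix_zero n k then p (st_up n k) else 0.
  by case: prefix_zero; rewrite ?mul1r ?mul0r.
under eq_bigr do rewrite indicator.
rewrite -big_mkcondr /=.
rewrite (@big_seq_reindex_cond _ _ _ _ box (fun y => (st_tot y < m)%N && prefix_zero y k)
  _ (fun y => st_up y k) (fun y => st_down y k) p) //.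
- exact: st_box_uniq.
- move=> y _ /andP[lt_y yk]; rewrite st_tot_up st_up_neq0 prefix_zero_up yk.
  rewrite st_tot_box ?st_tot_up /=; lia.
- by move=> y _ _; rewrite st_upK.
- move=> y yb /and3P[lt_y yk pk].
  rewrite st_box_down // st_downK // eqxx prefix_zero_down pk /=.
  have := st_tot_down yk; lia.
Qed.

(* Every nonzero state is st_up n k for exactly one k: its first nonzero level. *)
Lemma sum_first_nonzero_lt m :
  \sum_(k < K) \sum_(y <- box | [&& (st_tot y < m.+1)%N, y k != 0%N & prefix_zero y k]) p y =
  mass m.+1 - p (st_zero K).
Proof.
under eq_bigr do rewrite big_mkcondr.
rewrite exchange_big /=.
have -> : mass m.+1 = p (st_zero K) +
    \sum_(y <- box | (st_tot y < m.+1)%N) (if y != st_zero K then p y else 0).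
  rewrite /mass_lt big_mkcond (bigD1_seq (st_zero K)) ?st_box_uniq ?st_tot_box ?st_tot_zero //=.
  congr (_ + _); rewrite big_mkcond [RHS]big_mkcond; apply: eq_bigr => i _.
  by do 2 case: ifP.
rewrite addrAC subrr add0r; apply: eq_bigr => y _.
have [->|nz] := eqVneq y (st_zero K).
  by rewrite big1 // => k _; rewrite ffunE eqxx.
have [k0 /andP[nk0 pk0]] := first_nonzero_exists nz.
rewrite -big_mkcond (eq_bigl (pred1 k0)) ?big_pred1_eq // => k.
by apply/andP/eqP => [[nk pk]|->] //; exact: first_nonzero_unique nk pk nk0 pk0.
Qed.

Lemma mass_lt_balance m : (0 < m)%N -> (m <= N)%N ->
  (1 + r) * mass m = p (st_zero K) + r * mass m.-1 + (mass m.+1 - p (st_zero K)).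
Proof.
move=> m_gt0 le_mN.
rewrite /mass_lt mulr_sumr (eq_bigr _ (fun n _ => hbal n)) big_split /= sum_all_zero_lt //.
under eq_bigr do rewrite big_split /=.
rewrite big_split /= -addrA; congr (_ + (_ + _)).
  rewrite exchange_big mulr_suml; apply: eq_bigr => k _.
  by rewrite -mulr_sumr sum_p_down_lt // leqW.
rewrite exchange_big -sum_first_nonzero_lt; apply: eq_bigr => k _.
exact: sum_p_up_lt.
Qed.

Lemma mass_lt_increment m : (m <= N)%N -> mass m.+1 - mass m = r ^+ m * p (st_zero K).
Proof.
elim: m => [_|m IH le_mN]; first by rewrite mass_lt1 mass_lt0 subr0 expr0 mul1r.
have rec : mass m.+2 - mass m.+1 = r * (mass m.+1 - mass m).
  have : (1 + r) * mass m.+1 = p (st_zero K) + r * mass m + (mass m.+2 - p (st_zero K)).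
    exact: mass_lt_balance.
  move: (mass m) (mass m.+1) (mass m.+2) (p (st_zero K)) r => a b c z s; lra.
by rewrite rec (IH (ltnW le_mN)) exprS mulrA.
Qed.

Lemma mass_lt_closed m : (m <= N.+1)%N -> (1 - r) * mass m = p (st_zero K) * (1 - r ^+ m).
Proof.
elim: m => [_|m IH le_mN]; first by rewrite mass_lt0 expr0 subrr !mulr0.
have inc := mass_lt_increment le_mN.
rewrite -(subrK (mass m) (mass m.+1)) inc mulrDr (IH (ltnW le_mN)) exprS.
move: (p _) (r ^+ m) => z s; ring.
Qed.

End MassRecursion.

Lemma le0_ge_geometric (R : archiRealFieldType) (a z c : R) :
  `|z| < 1 -> (forall n, c <= a * z ^+ n) -> c <= 0.
Proof.
move=> z_lt1 c_le; apply: (cvgr_to_ge (cvg_geometric a z_lt1)).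
by apply: nearW => n; exact: c_le.
Qed.

Lemma bounded_recurrence_geometric (R : archiRealFieldType) (z1 z2 B : R) (a : nat -> R) :
  1 < z2 -> (forall m, a m.+2 = (z1 + z2) * a m.+1 - z1 * z2 * a m) ->
  (forall m, `|a m| <= B) -> forall m, a m = z1 ^+ m * a 0.
Proof.
move=> z2_gt1 rec a_le.
pose b m := a m.+1 - z1 * a m.
have b_geo m : b m = z2 ^+ m * b 0.
  elim: m => [|m IH]; first by rewrite mul1r.
  by rewrite exprS -mulrA -IH /b rec; ring.
have z2_gt0 : 0 < z2 by apply: lt_trans z2_gt1.
have b0 : b 0 = 0.
  apply/eqP; rewrite -normr_le0; apply: (@le0_ge_geometric _ (B + `|z1| * B) z2^-1).
    by rewrite normfV gtr0_norm // invf_lt1.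
  move=> m; have bm_le : `|b m| <= B + `|z1| * B.
    by rewrite (le_trans (ler_normB _ _)) // normrM lerD ?ler_wpM2l.
  rewrite exprVn ler_pdivlMr ?exprn_gt0 // mulrC -(ger0_norm (exprn_ge0 m (ltW z2_gt0))).
  by rewrite -normrM -b_geo.
elim=> [|m IH]; first by rewrite mul1r.
have /eqP := b_geo m; rewrite b0 mulr0 subr_eq0 => /eqP ->.
by rewrite IH exprS mulrA.
Qed.

Section FirstLevelQueue.
Variables (R : realType) (K : nat) (rr : 'I_K -> R) (p : state K -> R).
Hypotheses (hr : forall k, 0 < rr k) (hr1 : \sum_(k < K) rr k < 1).
Hypotheses (hp0 : forall n, 0 <= p n)
  (hsum : (\esum_(n in [set: state K]) (p n)%:E)%E = 1%E) (hbal : balance rr p).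
Local Notation r := (\sum_(k < K) rr k).
Local Notation p0 := (p (st_zero K)).

Lemma sum_uniq_le1 (s : seq (state K)) : uniq s -> \sum_(n <- s) p n <= 1.
Proof.
move=> us; rewrite -lee_fin -hsum fsbig_seq // -fsumEFin ?finite_seq //.
by apply: esum_ge; exists [set` s]%classic => //; split => //; exact: finite_seq.
Qed.

Lemma mass_lt_le1 N m : mass_lt p N m <= 1.
Proof. by rewrite /mass_lt -big_filter sum_uniq_le1 // filter_uniq ?st_box_uniq. Qed.

Lemma p_le1 n : p n <= 1.
Proof. by have := @sum_uniq_le1 [:: n] isT; rewrite big_seq1. Qed.

Lemma sum_rr_ge0 : 0 <= r.
Proof. by rewrite sumr_ge0 // => k _; exact: ltW. Qed.

Lemma p0_ge : 1 - r <= p0.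
Proof.
have r_ge0 := sum_rr_ge0.
have : (1 <= (p0 / (1 - r))%:E)%E.
  rewrite -hsum; apply: ge_ereal_sup => /= _ [X [finX _] <-].
  (* X lies below level N.+1, where the mass is p0 (1 - r^N.+1) / (1 - r). *)
  pose N := (\max_(n <- finmap.enum_fset (fset_set X)) st_tot n)%N.
  pose B := [set` [seq n <- st_box K N | (st_tot n < N.+1)%N]]%classic.
  apply: (@le_trans _ _ (\sum_(i \in B) (p i)%:E)%E).
    apply: lee_fsum_nneg_subset => //; first exact: finite_seq.
      move=> x; rewrite /B !mem_setE mem_filter => Xx.
      have xX : x \in finmap.enum_fset (fset_set X) by rewrite in_fset_set // mem_setE.
      have xN := @leq_bigmax_seq _ _ xpredT (@st_tot K) x xX isT.
      by rewrite ltnS xN st_tot_box.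
    by move=> t _; rewrite lee_fin.
  rewrite fsumEFin; last exact: finite_seq.
  rewrite /B -fsbig_seq ?filter_uniq ?st_box_uniq // big_filter -/(mass_lt p N N.+1) lee_fin.
  rewrite ler_pdivlMr ?subr_gt0 // mulrC (mass_lt_closed hbal) //.
  by rewrite ler_piMr // gerBl exprn_ge0.
by rewrite lee_fin ler_pdivlMr ?subr_gt0 // mul1r.
Qed.

Lemma p0_le : p0 <= 1 - r.
Proof.
rewrite -subr_le0; apply: (@le0_ge_geometric _ p0 r).
  by rewrite ger0_norm // sum_rr_ge0.
move=> m; have r_le1 : 0 <= 1 - r by rewrite subr_ge0 ltW.
have := ler_wpM2l r_le1 (mass_lt_le1 m m).
rewrite (mass_lt_closed hbal) // mulr1; lra.
Qed.

Lemma p0E : p0 = 1 - r.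
Proof. by apply/eqP; rewrite eq_le p0_le p0_ge. Qed.

Variable i1 : 'I_K.
Hypotheses (hK : (2 <= K)%N) (hi1 : val i1 = 0%N).

Lemma rr_lt_sum : rr i1 < r.
Proof.
have i1_neq : Ordinal hK != i1 by apply/eqP => /(congr1 val); rewrite hi1.
rewrite (bigD1 i1) //= ltrDl (bigD1 (Ordinal hK)) //= ltr_wpDr ?hr //.
by rewrite sumr_ge0 // => k _; exact: ltW.
Qed.

Lemma st_first_zero : st_first i1 0 = st_zero K.
Proof. by apply/ffunP => j; rewrite !ffunE; case: ifP. Qed.

Lemma st_first_down l : st_down (st_first i1 l.+1) i1 = st_first i1 l.
Proof. by apply/ffunP => j; rewrite !ffunE; case: eqP => //= _; rewrite subn1. Qed.

Lemma st_first_up l : st_up (st_first i1 l) i1 = st_first i1 l.+1.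
Proof. by apply/ffunP => j; rewrite !ffunE; case: eqP => //= _; rewrite addn1. Qed.

Lemma p_st_first_rec l : p (st_first i1 l.+2) =
  (1 + r) * p (st_first i1 l.+1) - rr i1 * p (st_first i1 l).
Proof.
apply/eqP; rewrite eq_sym subr_eq hbal all_zeroE.
have -> : (st_first i1 l.+1 == st_zero K) = false.
  by apply/negbTE/eqP => /ffunP/(_ i1); rewrite !ffunE eqxx.
rewrite mul0r add0r (bigD1 i1) //= big1 ?addr0.
  rewrite /p_down ffunE eqxx /= st_first_down st_first_up addrC.
  rewrite (_ : prefix_zero _ i1 = true) ?mul1r //.
  by apply/forallP => j; rewrite hi1 ltn0.
move=> k k_neq; have k_gt0 : (0 < val k)%N.
  by rewrite lt0n; apply: contra k_neq => /eqP k0; apply/eqP/val_inj; rewrite /= k0 hi1.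
rewrite /p_down ffunE (negbTE k_neq) eqxx mulr0 add0r.
rewrite (_ : prefix_zero _ k = false) ?mul0r //.
by apply/negbTE/negP => /forallP/(_ i1); rewrite hi1 k_gt0 /= ffunE eqxx.
Qed.

End FirstLevelQueue.

Theorem mainTheorem7 (R : realType) (K : nat) (hK : (2 <= K)%N)
  (rr : 'I_K -> R) (hr : forall k, 0 < rr k) (hr1 : \sum_(k < K) rr k < 1)
  (i1 : 'I_K) (hi1 : val i1 = 0%N)
  (p : {ffun 'I_K -> nat} -> R)
  (hp0 : forall n, 0 <= p n)
  (hsum : (\esum_(n in [set: {ffun 'I_K -> nat}]) (p n)%:E)%E = 1%E)
  (hbal : balance rr p)
  (l : nat) :
  p (st_first i1 l) =
    (1 - \sum_(k < K) rr k) *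
    ((1 + \sum_(k < K) rr k
      - Num.sqrt ((1 + \sum_(k < K) rr k) ^+ 2 - 4 * rr i1)) / 2) ^+ l.
Proof.
have p0 := p0E hr hr1 hp0 hsum hbal; have r1_lt := rr_lt_sum hr hK hi1.
set r := \sum_(k < K) rr k in hr1 p0 r1_lt *.
set D := (1 + r) ^+ 2 - 4 * rr i1; set s := Num.sqrt D.
have D_gt : (1 - r) ^+ 2 < D by rewrite /D; nra.
have s2 : s ^+ 2 = D by rewrite sqr_sqrtr // (le_trans _ (ltW D_gt)) ?sqr_ge0.
have s_gt : 1 - r < s.
  rewrite -[1 - r]ger0_norm ?subr_ge0 ?ltW // -sqrtr_sqr ltr_sqrt //.
  exact: le_lt_trans (sqr_ge0 _) D_gt.
set z1 := (1 + r - s) / 2; set z2 := (1 + r + s) / 2.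
have z_sum : z1 + z2 = 1 + r by rewrite /z1 /z2; field.
have z_prod : z1 * z2 = rr i1.
  by rewrite /z1 /z2 -[rr i1](_ : ((1 + r) ^+ 2 - s ^+ 2) / 4 = _); [field | rewrite s2 /D; field].
rewrite mulrC -p0 -(st_first_zero i1).
apply: (@bounded_recurrence_geometric _ z1 z2 1 (fun m => p (st_first i1 m))).
- by rewrite /z2; lra.
- by move=> m; rewrite z_sum z_prod (p_st_first_rec hbal hi1).
- by move=> m; rewrite ger0_norm //; exact: p_le1 hsum _.
Qed.
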